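(* Consider graphs of maximum degree $4$ with ports numbered $1,2,3,4$, and the following protocol. For each node $v$ on a fixed shortest path from the source $s$ to the treasure $t$ (of length $D$), other than $t$, the oracle places at $v$ a quantum pebble emitting qubits in state $\psi_i$, where $i$ is the port at $v$ of the next edge of the path and $\psi_1=|0\rangle$, $\psi_2=|1\rangle$, $\psi_3=|+\rangle$, $\psi_4=|-\rangle$ (with $|\pm\rangle=(|0\rangle\pm|1\rangle)/\sqrt2$). At each node the agent measures $n$ emitted qubits in the computational basis $\{|0\rangle,|1\rangle\}$ and $n$ emitted qubits in the sign basis $\{|+\rangle,|-\rangle\}$; if exactly one of the two bases yields the same outcome in all $n$ measurements, the agent takes the port corresponding to that outcome ($0\mapsto1$, $1\mapsto2$, $+\mapsto3$, $-\mapsto4$), and if both bases yield uniform outcome strings the search fails. If $n=O(\log D)$ (measurements in each of the two bases at each node of the shortest path), then the probability that the agent reaches the treasure in $D$ steps is close to $1$ (it tends to $1$ as $D\to\infty$).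
   Context: Anonymous graph: connected simple undirected graph with unlabelled nodes, edges at each node carrying distinct local port numbers. The agent is oblivious (no memory between rounds) and in each round can traverse at most one edge. A quantum pebble is a source placed at a node by an oracle that repeatedly emits qubits, all in the same quantum state, which is unknown to the agent; the agent can obtain arbitrarily many copies and perform projective single-qubit measurements on them. *)

From HB Require Import structures.
From mathcomp Require Import all_boot all_order all_algebra.
From mathcomp Require Import reals.
Set Implicit Arguments. Unset Strict Implicit. Unset Printing Implicit Defensive.
Import Order.TTheory GRing.Theory Num.Theory.
Local Open Scope ring_scope.

(* Ports 1,2,3,4 are represented by the ordinals 0,1,2,3 of 'I_4. *)

Section QPebble.
Variable R : realType.

(* Real qubit states as amplitude pairs (all states here have real amplitudes). *)
Definition qstate := (R * R)%type.
Definition ket0 : qstate := (1, 0).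
Definition ket1 : qstate := (0, 1).
Definition ketp : qstate := ((Num.sqrt 2)^-1, (Num.sqrt 2)^-1).
Definition ketm : qstate := ((Num.sqrt 2)^-1, - (Num.sqrt 2)^-1).
Definition inner (u v : qstate) : R := u.1 * v.1 + u.2 * v.2.

Definition psi (i : 'I_4) : qstate :=
  match val i with 0 => ket0 | 1 => ket1 | 2 => ketp | _ => ketm end.

Definition comp_vec (b : bool) : qstate := if b then ket1 else ket0.
Definition sign_vec (b : bool) : qstate := if b then ketm else ketp.

Definition born (e phi : qstate) : R := (inner e phi) ^+ 2.

Definition record_prob n (i : 'I_4) (r : n.-tuple bool * n.-tuple bool) : R :=
  (\prod_(b <- r.1) born (comp_vec b) (psi i)) *
  (\prod_(b <- r.2) born (sign_vec b) (psi i)).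

Definition uniform_outcomes (s : seq bool) : bool := all (pred1 (head false s)) s.

Definition port1 : 'I_4 := @Ordinal 4 0 isT.
Definition port2 : 'I_4 := @Ordinal 4 1 isT.
Definition port3 : 'I_4 := @Ordinal 4 2 isT.
Definition port4 : 'I_4 := @Ordinal 4 3 isT.

Definition decide n (r : n.-tuple bool * n.-tuple bool) : option 'I_4 :=
  let ux := uniform_outcomes r.1 in
  let uy := uniform_outcomes r.2 in
  if ux && ~~ uy then Some (if head false r.1 then port2 else port1)
  else if uy && ~~ ux then Some (if head false r.2 then port4 else port3)
  else None.

(* Probability that the agent reaches the treasure in D steps, given that the
   fixed shortest path s = v_0, ..., v_D = t leaves v_j by port (ports j).
   The sample space is the collection of all measurement records at the D
   nodes v_0..v_{D-1}, the records at distinct nodes being independent. The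
   treasure is reached within D steps iff the agent decides the correct port at
   every node of the path. *)
Definition success_prob (D n : nat) (ports : 'I_D -> 'I_4) : R :=
  \sum_(w : {ffun 'I_D -> n.-tuple bool * n.-tuple bool}
         | [forall j, decide (w j) == Some (ports j)])
     \prod_(j < D) record_prob (ports j) (w j).

End QPebble.

(* At a node whose pebble emits a state of one basis, measuring in that basis
   returns a constant string with certainty, while the other basis is mutually
   unbiased, so its n outcomes are fair coin flips and form a uniform string
   with probability only 2/2^n.  Hence the agent decides correctly at each node
   with probability at least 1 - 2/2^n.  The records at distinct nodes are
   independent, so by Bernoulli's inequality the walk fails with probability
   at most 2D/2^n, which is at most 2/D once 2^n >= D^2, i.e. for
   n = 2 (floor(log2 D) + 1). *)

From HB Require Import structures.
From mathcomp Require Import all_boot all_order all_algebra.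
From mathcomp Require Import reals.
From mathcomp Require Import lra zify.
Set Implicit Arguments.
Unset Strict Implicit.
Unset Printing Implicit Defensive.

Import Order.TTheory GRing.Theory Num.Theory.
Local Open Scope ring_scope.

Lemma ler_sum_rect (R : numDomainType) (I J : finType) (P : pred (I * J))
    (QI : pred I) (QJ : pred J) (A : I -> R) (B : J -> R) :
  (forall x y, 0 <= A x * B y) -> (forall x y, QI x -> QJ y -> P (x, y)) ->
  (\sum_(x | QI x) A x) * (\sum_(y | QJ y) B y) <= \sum_(r | P r) A r.1 * B r.2.
Proof.
move=> AB_ge0 QP; rewrite big_distrlr pair_big_dep /=.
rewrite [leRHS]big_mkcond [leLHS]big_mkcond; apply: ler_sum => -[x y] _ /=.
by case: (boolP (QI x && QJ y)) => [/andP[/QP/[apply] ->] | _] //; case: ifP.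
Qed.

Lemma bernoulli_le (R : realDomainType) (x : R) n :
  x <= 1 -> 1 - n%:R * x <= (1 - x) ^+ n.
Proof.
move=> x_le1; elim: n => [|n IHn]; first by rewrite mul0r subr0 expr0.
have step : (1 - x) * (1 - n%:R * x) <= (1 - x) * (1 - x) ^+ n.
  by rewrite ler_wpM2l // subr_ge0.
have nx2_ge0 : 0 <= n%:R * x * x by rewrite -mulrA mulr_ge0 // -expr2 sqr_ge0.
rewrite exprS -natr1; nra.
Qed.

Lemma ler_div_nat_truncn (R : archiRealFieldType) (c eps : R) (D : nat) :
  0 < eps -> (Num.truncn (c / eps) < D)%N -> c / D%:R <= eps.
Proof.
move=> eps_gt0 D_gt; have D_gt0 : (0 < D)%N by case: D D_gt.
rewrite ler_pdivrMr ?ltr0n // mulrC -ler_pdivrMr //.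
by apply/ltW/(lt_le_trans (truncnS_gt _)); rewrite ler_nat.
Qed.

Lemma ler_mul_div_exp2_double (R : realFieldType) (D m : nat) :
  (0 < D)%N -> (D < 2 ^ m)%N -> D%:R * (2 / 2 ^+ m.*2) <= 2 / D%:R :> R.
Proof.
move=> D_gt0 D_lt; set P : R := 2 ^+ m.*2.
have P_gt0 : 0 < P by rewrite exprn_gt0.
have DD_le : D%:R * D%:R <= P.
  by rewrite /P -addnn exprD -natrM -natrX -natrM ler_nat leq_mul // ltnW.
rewrite mulrA ler_pdivrMr // mulrAC ler_pdivlMr ?ltr0n //.
by rewrite mulrAC mulrC ler_pM2l.
Qed.

Definition comp_port (b : bool) : 'I_4 := if b then port2 else port1.
Definition sign_port (b : bool) : 'I_4 := if b then port4 else port3.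

Lemma port_cases (i : 'I_4) :
  (exists b, i = comp_port b) \/ (exists b, i = sign_port b).
Proof.
case: i => -[|[|[|[|//]]]] i_lt.
- by left; exists false; apply: val_inj.
- by left; exists true; apply: val_inj.
- by right; exists false; apply: val_inj.
- by right; exists true; apply: val_inj.
Qed.

Lemma uniform_outcomes_nseq n b : uniform_outcomes (nseq n b).
Proof. by case: n => // n; apply/all_pred1P; rewrite size_nseq. Qed.

Lemma card_uniform_outcomes n :
  (#|[pred y : n.-tuple bool | uniform_outcomes y]| <= 2)%N.
Proof.
have uniform_nseq (y : n.-tuple bool) :
    uniform_outcomes y -> y \in [set nseq_tuple n false; nseq_tuple n true].
  move=> /all_pred1P; rewrite size_tuple => y_eq; rewrite !inE.
  by case: (head false y) y_eq => y_eq; apply/orP; [right | left];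
    apply/eqP/val_inj; rewrite /= y_eq.
rewrite (leq_trans (subset_leq_card (introT subsetP uniform_nseq))) //.
by rewrite cards2; case: (_ != _).
Qed.

Lemma decide_comp_port n b (y : n.+1.-tuple bool) :
  ~~ uniform_outcomes y -> decide (nseq_tuple n.+1 b, y) = Some (comp_port b).
Proof.
move=> y_mixed.
by rewrite /decide (uniform_outcomes_nseq n.+1 b) (negbTE y_mixed).
Qed.

Lemma decide_sign_port n b (x : n.+1.-tuple bool) :
  ~~ uniform_outcomes x -> decide (x, nseq_tuple n.+1 b) = Some (sign_port b).
Proof.
move=> x_mixed.
by rewrite /decide (uniform_outcomes_nseq n.+1 b) (negbTE x_mixed).
Qed.

Section Measurement.
Variable R : realType.

Lemma inv_sqrt2_sq : (Num.sqrt (2 : R))^-1 ^+ 2 = 2^-1.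
Proof. by rewrite exprVn sqr_sqrtr // ler0n. Qed.

Lemma bornC (e phi : qstate R) : born e phi = born phi e.
Proof. by rewrite /born /inner mulrC [e.2 * _]mulrC. Qed.

Lemma born_ge0 (e phi : qstate R) : 0 <= born e phi.
Proof. exact: sqr_ge0. Qed.

Lemma psi_comp_port b : psi R (comp_port b) = comp_vec R b.
Proof. by case: b. Qed.

Lemma psi_sign_port b : psi R (sign_port b) = sign_vec R b.
Proof. by case: b. Qed.

Lemma born_comp_vec b : born (comp_vec R b) (comp_vec R b) = 1.
Proof.
by case: b; rewrite /born /inner /= !(mulr0, mulr1, addr0, add0r) expr1n.
Qed.

Lemma born_sign_vec b : born (sign_vec R b) (sign_vec R b) = 1.
Proof.
have half_sum : (2 : R)^-1 + 2^-1 = 1 by lra.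
by case: b; rewrite /born /inner /= ?mulrNN -expr2 inv_sqrt2_sq half_sum expr1n.
Qed.

Lemma born_comp_sign b c : born (comp_vec R b) (sign_vec R c) = 2^-1.
Proof.
by case: b; case: c;
  rewrite /born /inner /= !(mul1r, mul0r, addr0, add0r) ?sqrrN inv_sqrt2_sq.
Qed.

Lemma born_sign_comp b c : born (sign_vec R b) (comp_vec R c) = 2^-1.
Proof. by rewrite bornC born_comp_sign. Qed.

Lemma prod_born_nseq (e : bool -> qstate R) phi n b :
  born (e b) phi = 1 -> \prod_(c <- nseq n b) born (e c) phi = 1.
Proof.
move=> eb1; rewrite big1_seq // => c /andP[_].
by rewrite mem_nseq => /andP[_ /eqP ->].
Qed.

Lemma prod_born_unbiased (e : bool -> qstate R) phi n (y : n.-tuple bool) :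
  (forall c, born (e c) phi = 2^-1) ->
  \prod_(c <- y) born (e c) phi = (2 ^+ n)^-1.
Proof.
move=> half; rewrite big_tuple (eq_bigr (fun=> 2^-1)) //.
by rewrite prodr_const card_ord exprVn.
Qed.

Lemma sum_nonuniform_ge n :
  1 - 2 / 2 ^+ n <=
  \sum_(y : n.-tuple bool | ~~ uniform_outcomes y) (2 ^+ n)^-1 :> R.
Proof.
set K : R := (2 ^+ n)^-1.
have total : \sum_(y : n.-tuple bool) K = 1.
  rewrite sumr_const card_tuple card_bool -mulr_natr natrX /K.
  by rewrite mulVf // expf_neq0 // pnatr_eq0.
have uniform_le : \sum_(y : n.-tuple bool | uniform_outcomes y) K <= 2 * K.
  rewrite sumr_const -[K *+ _]mulr_natl ler_wpM2r ?invr_ge0 ?exprn_ge0 //.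
  by rewrite ler_nat card_uniform_outcomes.
rewrite (bigID [pred y : n.-tuple bool | uniform_outcomes y]) /= in total.
rewrite mulrC -/K; lra.
Qed.

Lemma node_success_ge n i :
  1 - 2 / 2 ^+ n.+1 <= \sum_(r | decide r == Some i) @record_prob R n.+1 i r.
Proof.
have AB_ge0 (x y : n.+1.-tuple bool) :
    0 <= (\prod_(c <- x) born (comp_vec R c) (psi R i)) *
         (\prod_(c <- y) born (sign_vec R c) (psi R i)).
  by rewrite mulr_ge0 // prodr_ge0 // => c _; apply: born_ge0.
(* The basis containing psi i yields a constant string with certainty, so a
   non-uniform string in the other basis already forces the right port. *)
pose P (r : n.+1.-tuple bool * n.+1.-tuple bool) := decide r == Some i.
case: (port_cases i) => -[b i_eq].
- apply: (le_trans _ (ler_sum_rect (P := P) (QI := pred1 (nseq_tuple n.+1 b))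
    (QJ := fun y => ~~ uniform_outcomes y) AB_ge0 _)); last first.
    by move=> x y /eqP -> y_mixed; rewrite /P (decide_comp_port b y_mixed) i_eq.
  rewrite big_pred1_eq i_eq psi_comp_port.
  rewrite prod_born_nseq ?born_comp_vec // mul1r.
  under eq_bigr do rewrite (prod_born_unbiased _ (fun c => born_sign_comp c b)).
  exact: sum_nonuniform_ge.
- apply: (le_trans _ (ler_sum_rect (P := P)
    (QI := fun x => ~~ uniform_outcomes x) (QJ := pred1 (nseq_tuple n.+1 b))
    AB_ge0 _)); last first.
    by move=> x y x_mixed /eqP ->; rewrite /P (decide_sign_port b x_mixed) i_eq.
  rewrite big_pred1_eq i_eq psi_sign_port.
  rewrite prod_born_nseq ?born_sign_vec // mulr1.
  under eq_bigr do rewrite (prod_born_unbiased _ (fun c => born_comp_sign c b)).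
  exact: sum_nonuniform_ge.
Qed.

Lemma success_prob_prod D n (ports : 'I_D -> 'I_4) :
  success_prob R n ports =
  \prod_(j < D)
    \sum_(r : n.-tuple bool * n.-tuple bool | decide r == Some (ports j))
      record_prob R (ports j) r.
Proof.
rewrite bigA_distr_big_dep; apply: eq_bigl => w.
by apply/forallP/familyP => w_ok j; have := w_ok j.
Qed.

Lemma success_prob_ge D n (ports : 'I_D -> 'I_4) :
  1 - D%:R * (2 / 2 ^+ n.+1) <= success_prob R n.+1 ports.
Proof.
set e : R := 2 / 2 ^+ n.+1.
have e_le1 : e <= 1.
  rewrite ler_pdivrMr ?exprn_gt0 // mul1r -natrX ler_nat.
  by rewrite expnS leq_pmulr // expn_gt0.
apply: le_trans (bernoulli_le D e_le1) _.
have -> : (1 - e) ^+ D = \prod_(j < D) (1 - e) by rewrite prodr_const card_ord.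
rewrite success_prob_prod; apply: ler_prod => j _.
by rewrite subr_ge0 e_le1; apply: node_success_ge.
Qed.

End Measurement.

Theorem lemma4 (R : realType) :
  exists n : nat -> nat,
    (exists (C D1 : nat), forall D : nat, (D1 <= D)%N -> (n D <= C * trunc_log 2 D)%N) /\
    (forall eps : R, 0 < eps -> exists D0 : nat, forall D : nat, (D0 <= D)%N ->
       forall ports : 'I_D -> 'I_4, 1 - eps <= @success_prob R D (n D) ports).
Proof.
exists (fun D => (trunc_log 2 D).+1.*2); split.
  exists 4%N, 2%N => D D_ge2.
  have : (0 < trunc_log 2 D)%N by rewrite trunc_log_gt0.
  rewrite -addnn; lia.
move=> eps eps_gt0; exists (Num.truncn (2 / eps)).+1 => D D_gt ports.
have D_gt0 : (0 < D)%N by apply: leq_trans D_gt.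
apply: le_trans (success_prob_ge R (trunc_log 2 D).*2.+1 ports).
rewrite lerD2l lerN2 -doubleS.
apply: le_trans (ler_mul_div_exp2_double R D_gt0 (@trunc_log_ltn 2 D isT)) _.
exact: ler_div_nat_truncn.
Qed.
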